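(* Let $A$ be an $m\times m$ coloring matrix, let $m'\ge1$, and let $A'$ be the $(m+m')\times(m+m')$ block matrix $$A'=\left[\begin{array}{c|c}A&0\\\hline \mathbf{1}&\mathbf{1}\end{array}\right],$$ where the bottom blocks are the $m'\times m$ and $m'\times m'$ all-ones matrices and the upper right block is zero. Then $$F_{A'}(x)=F_A(x)+F_{A'}(x)^2-F_{A'}(x)F_A(x)+m'x,$$ and consequently $$F_{A'}(x)=\frac{1+F_A(x)-\sqrt{(1-F_A(x))^2-4m'x}}{2}.$$
   Context: A plane tree is an unlabeled rooted tree in which the children of every vertex are linearly ordered. A coloring matrix is a square matrix $A=(a_{ij})$ with entries in $\{0,1\}$. An $A$-coloring of a plane tree assigns to each vertex a color (an index of a row of $A$) such that whenever a vertex of color $j$ is a child of a vertex of color $i$, $a_{ij}=1$. Let $t_A(n)$ be the number of pairs (plane tree with $n$ vertices, $A$-coloring of it), and $F_A(x)=\sum_{n\ge1}t_A(n)x^n$ (formal power series; the square root is the formal power series branch with constant term $1$). *)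

From mathcomp Require Import all_boot all_order all_algebra.
From Stdlib Require Import ClassicalEpsilon.
Set Implicit Arguments. Unset Strict Implicit. Unset Printing Implicit Defensive.
Import GRing.Theory.
Local Open Scope ring_scope.

Definition coloring_matrix (k : nat) := 'M[bool]_k.

(* A plane tree together with a coloring of its vertices by colors 'I_k:
   each vertex carries a color and an ordered list of children. *)
Inductive ctree (k : nat) : Type := CNode of 'I_k & seq (ctree k).

Definition color k (t : ctree k) : 'I_k := let: CNode c _ := t in c.

Fixpoint csize k (t : ctree k) : nat :=
  let: CNode _ ts := t in (sumn (map (@csize k) ts)).+1.

Fixpoint Acolored k (A : coloring_matrix k) (t : ctree k) : bool :=
  let: CNode c ts := t in
  all (fun s => A c (color s) && Acolored A s) ts.

Definition is_count k (A : coloring_matrix k) (n k0 : nat) : Prop :=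
  exists s : list (ctree k),
    List.NoDup s /\ length s = k0 /\
    forall t, List.In t s <-> (Acolored A t /\ csize t = n).

Definition tA k (A : coloring_matrix k) (n : nat) : nat :=
  epsilon (inhabits 0%N) (is_count A n).

Definition fps := nat -> rat.

Definition fps_add (f g : fps) : fps := fun n => f n + g n.
Definition fps_sub (f g : fps) : fps := fun n => f n - g n.
Definition fps_mul (f g : fps) : fps :=
  fun n => \sum_(i < n.+1) f i * g (n - i)%N.
Definition fps_scale (c : rat) (f : fps) : fps := fun n => c * f n.
Definition fps_const (c : rat) : fps := fun n => if n == 0%N then c else 0.
Definition fps_X : fps := fun n => if n == 1%N then 1 else 0.

Definition FA k (A : coloring_matrix k) : fps :=
  fun n => if n == 0%N then 0 else (tA A n)%:R.

Definition extA m m' (A : coloring_matrix m) : coloring_matrix (m + m') :=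
  block_mx A (const_mx false) (const_mx true) (const_mx true).

(* A tree coloured by A' either has one of the m old colours at its root, and then,
   the upper right block being zero, it is an A-coloured tree; or its root has one of
   the m' new colours, which accept children of every colour, so that below the root
   hangs an arbitrary sequence of A'-coloured trees.  With Phi the series counting such
   sequences, Phi = 1 + F_{A'} Phi and F_{A'} = F_A + m' x Phi; eliminating Phi gives the
   quadratic equation.  It says that 1 + F_A - 2 F_{A'} squares to (1 - F_A)^2 - 4 m' x,
   and a power series square root with constant term 1 is unique. *)

From Stdlib Require Import List ClassicalEpsilon.
From mathcomp Require Import all_boot all_order all_algebra.
From mathcomp Require Import zify ring lra.
Import GRing.Theory.
Set Implicit Arguments. Unset Strict Implicit. Unset Printing Implicit Defensive.

Section Counting.
Variable X : Type.
Implicit Types (P Q : X -> Prop).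

Definition has_card P (n : nat) :=
  exists s : list X, NoDup s /\ length s = n /\ forall x, In x s <-> P x.

Definition card_of P : nat := epsilon (inhabits 0) (has_card P).

Lemma card_ofP P : (exists n, has_card P n) -> has_card P (card_of P).
Proof. exact: epsilon_spec. Qed.

Lemma has_card_unique P a b : has_card P a -> has_card P b -> a = b.
Proof.
move=> [s [Ns [<- Es]]] [u [Nu [<- Eu]]].
by apply/anti_leq/andP; split; apply/leP; apply: NoDup_incl_length => // x; rewrite Es Eu.
Qed.

Lemma eq_has_card P Q n : (forall x, P x <-> Q x) -> has_card P n -> has_card Q n.
Proof. by move=> PQ [s [Ns [Ls Es]]]; exists s; split=> //; split=> // x; rewrite Es. Qed.

Lemma has_card0 P : (forall x, ~ P x) -> has_card P 0.
Proof. by move=> P0; exists nil; split; [constructor | split=> // x; split=> [[] | /P0]]. Qed.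

Lemma has_card1 P y : (forall x, P x <-> x = y) -> has_card P 1.
Proof.
move=> Py; exists [:: y]; split; first by do !constructor.
by split=> // x; rewrite Py /=; split=> [[-> | []] // | ->]; left.
Qed.

Lemma has_card_filter P (q : pred X) n :
  has_card P n -> exists n', has_card (fun x => P x /\ q x) n'.
Proof.
move=> [s [Ns [_ Es]]]; exists (length (filter q s)), (filter q s).
by split; [exact: NoDup_filter | split=> // x; rewrite filter_In Es].
Qed.

Lemma has_cardU P Q a b : (forall x, P x -> ~ Q x) ->
  has_card P a -> has_card Q b -> has_card (fun x => P x \/ Q x) (a + b).
Proof.
move=> PQ [s [Ns [Ls Es]]] [u [Nu [Lu Eu]]]; exists (s ++ u); split; last split.
- by apply: NoDup_app => // x /Es Px /Eu; exact: PQ.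
- by rewrite length_app Ls Lu.
- by move=> x; rewrite in_app_iff Es Eu.
Qed.

Lemma has_card_bigcup (I : eqType) (L : seq I) (P : I -> X -> Prop) (a : I -> nat) :
  uniq L -> (forall i j x, P i x -> P j x -> i = j) ->
  (forall i, i \in L -> has_card (P i) (a i)) ->
  has_card (fun x => exists2 i, i \in L & P i x) (\sum_(i <- L) a i).
Proof.
move=> + Pdisj; elim: L => [_ _|i L IH /= /andP [iL uL] cardP].
  by rewrite big_nil; apply: has_card0 => x [].
have disj x : P i x -> ~ exists2 j, j \in L & P j x.
  by move=> Pix [j jL /(Pdisj _ _ _ Pix) ij]; move: iL; rewrite ij jL.
have cardL j : j \in L -> has_card (P j) (a j).
  by move=> jL; apply: cardP; rewrite in_cons jL orbT.
rewrite big_cons; apply: eq_has_card (has_cardU disj (cardP i (mem_head _ _)) (IH uL cardL)) => x.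
split=> [[Pix | [j jL Pjx]] | [j]]; first by exists i; rewrite ?mem_head.
  by exists j; rewrite // in_cons jL orbT.
by rewrite in_cons => /orP [/eqP -> | jL] Pjx; [left | right; exists j].
Qed.

End Counting.

Lemma has_card_image X Y (f : X -> Y) (P : X -> Prop) n : injective f ->
  has_card P n -> has_card (fun y => exists2 x, P x & y = f x) n.
Proof.
move=> f_inj [s [Ns [Ls Es]]]; exists (List.map f s); split; last split.
- by apply: NoDup_map_NoDup_ForallPairs => // x y _ _; exact: f_inj.
- by rewrite length_map.
- by move=> y; rewrite in_map_iff; split=> [[x [<- /Es Px]] | [x /Es Px ->]]; exists x.
Qed.

Lemma has_card_prod X Y (P : X -> Prop) (Q : Y -> Prop) a b :
  has_card P a -> has_card Q b -> has_card (fun p : X * Y => P p.1 /\ Q p.2) (a * b).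
Proof.
move=> [s [Ns [Ls Es]]] [u [Nu [Lu Eu]]]; exists (list_prod s u); split; last split.
- elim: s {Ls Es} Ns => [|x s IH] Ns /=; first by constructor.
  move: Ns => /NoDup_cons_iff [xs Ns]; apply: NoDup_app.
  + by apply: NoDup_map_NoDup_ForallPairs => // y y' _ _ [].
  + exact: IH.
  + by move=> [x' y] /in_map_iff [y' [[<- _] _]] /in_prod_iff [].
- by rewrite length_prod Ls Lu.
- by move=> [x y]; rewrite in_prod_iff Es Eu.
Qed.

(* The induction principle generated for the nested type [ctree] has no hypothesis
   on the children. *)
Definition ctree_ind_In k (P : ctree k -> Prop)
    (IH : forall c ts, (forall t, In t ts -> P t) -> P (CNode c ts)) :
    forall t, P t :=
  fix F t := let: CNode c ts := t in IH c ts
    ((fix G (ts : seq (ctree k)) : forall t, In t ts -> P t :=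
       match ts return forall t, In t ts -> P t with
       | nil => fun t (i : In t nil) => False_ind _ i
       | u :: us => fun t i => match i with
           | or_introl e => eq_ind u P (F u) t e
           | or_intror i' => G us t i' end
       end) ts).

Lemma eq_map_In X Y (f g : X -> Y) (s : seq X) :
  (forall x, In x s -> f x = g x) -> map f s = map g s.
Proof. by elim: s => //= x s IH fg; rewrite fg ?IH // => [y ys|]; [apply: fg; right | left]. Qed.

Lemma eq_all_In X (p q : pred X) (s : seq X) :
  (forall x, In x s -> p x = q x) -> all p s = all q s.
Proof. by elim: s => //= x s IH pq; rewrite pq ?IH // => [y ys|]; [apply: pq; right | left]. Qed.

Lemma csize_gt0 k (t : ctree k) : (0 < csize t)%N.
Proof. by case: t. Qed.

Section ColoredTrees.
Variables (k : nat) (A : coloring_matrix k).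

Definition Atree n (t : ctree k) := Acolored A t /\ csize t = n.

Definition Aforest (root : pred 'I_k) n (f : seq (ctree k)) :=
  all (fun t => root (color t) && Acolored A t) f /\ sumn (map (@csize k) f) = n.

Lemma has_card_Atree0 : has_card (Atree 0) 0.
Proof. by apply: has_card0 => t [_ t0]; move: (csize_gt0 t); rewrite t0. Qed.

Lemma has_card_Aforest0 root : has_card (Aforest root 0) 1.
Proof. by apply: (has_card1 (y := [::])) => -[|[c ts] f]; split=> //= -[]. Qed.

Lemma has_card_Atree_root n (L : seq 'I_k) (a : 'I_k -> nat) : uniq L ->
  (forall c, c \in L -> has_card (Aforest (A c) n) (a c)) ->
  has_card (fun t => Atree n.+1 t /\ color t \in L) (\sum_(c <- L) a c).
Proof.
move=> uL cardF.
pose P c t := exists2 f, Aforest (A c) n f & t = CNode c f.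
apply: eq_has_card (has_card_bigcup (P := P) uL _ _) => [t | c d t [f _ ->] [g _ []] // | c cL].
- split=> [[c cL [f [Af sf] ->]] | [[At st] tL]]; first by rewrite /Atree /= sf.
  by case: t At st tL => c f /= Af [sf] cL; exists c => //; exists f.
- by apply: has_card_image (cardF c cL) => f g [].
Qed.

Lemma has_card_Aforest_S (root : pred 'I_k) n (a b : nat -> nat) :
  (forall j, (j <= n)%N -> has_card (fun t => Atree j.+1 t /\ root (color t)) (a j)) ->
  (forall j, (j <= n)%N -> has_card (Aforest root (n - j)) (b j)) ->
  has_card (Aforest root n.+1) (\sum_(j < n.+1) a j * b j).
Proof.
move=> cardT cardF; rewrite -(big_mkord xpredT (fun j => a j * b j)).
pose P j f := exists2 p, (Atree j.+1 p.1 /\ root (color p.1)) /\ Aforest root (n - j) p.2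
                       & f = p.1 :: p.2.
apply: eq_has_card (has_card_bigcup (P := P) (iota_uniq 0 n.+1) _ _)
  => [f | i j f [[t g] [[[_ st] _] _] ->] [[u h] [[[_ su] _] _] [tu _]] | j].
- split=> [[j] | ].
    rewrite mem_iota ltnS => jn [[t g] [[[At st] rt] [Ag sg]] ->].
    by split; rewrite /= ?rt ?At //= st sg addSn subnKC.
  case: f => [[] // | t g [/andP [/andP [rt At] Ag] sg]].
  have st := csize_gt0 t; rewrite /= in sg.
  exists (csize t).-1; first by rewrite mem_iota; lia.
  by exists (t, g) => //=; split; split; rewrite ?prednK //; lia.
- by move: st; rewrite tu su => -[].
- rewrite mem_iota add0n ltnS => jn.
  apply: has_card_image (has_card_prod (cardT j jn) (cardF j jn)).
  by move=> [t g] [u h] /= [-> ->].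
Qed.

Lemma Atree_finite n :
  (exists a, has_card (Atree n) a) /\ forall root, exists b, has_card (Aforest root n) b.
Proof.
elim/ltn_ind: n => -[_ | n IH].
  by split=> [| root]; [exists 0; exact: has_card_Atree0 | exists 1; exact: has_card_Aforest0].
have treeS : exists a, has_card (Atree n.+1) a.
  eexists; apply: eq_has_card (has_card_Atree_root (n := n) (enum_uniq 'I_k) _) => [t | c _].
    by split=> [[] | ]; rewrite ?mem_enum.
  exact/card_ofP/(IH n (ltnSn n)).2.
have trees j : (j <= n)%N -> exists a, has_card (Atree j.+1) a.
  by rewrite leq_eqVlt => /orP [/eqP -> // | jn]; exact: (IH j.+1 jn).1.
split=> // root; eexists; apply: has_card_Aforest_S => j jn; apply: card_ofP.
  by have [a /has_card_filter] := trees j jn; apply.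
by apply: (IH _ _).2; rewrite ltnS leq_subr.
Qed.

(* [tA A n] unfolds to [card_of (Atree n)]. *)
Lemma has_card_tA n : has_card (Atree n) (tA A n).
Proof. exact/card_ofP/(Atree_finite n).1. Qed.

End ColoredTrees.

Section ExtendedMatrix.
Variables (m m' : nat) (A : coloring_matrix m).
Local Notation B := (extA m' A).

Lemma extAEul i j : B (lshift m' i) (lshift m' j) = A i j.
Proof. by rewrite /extA block_mxEul. Qed.

Lemma extAEur i j : B (lshift m' i) (rshift m j) = false.
Proof. by rewrite /extA block_mxEur mxE. Qed.

Lemma extAEd i c : B (rshift m i) c = true.
Proof. by case: (split_ordP c) => j ->; rewrite /extA (block_mxEdl, block_mxEdr) mxE. Qed.

Fixpoint lshift_ctree (t : ctree m) : ctree (m + m') :=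
  let: CNode c ts := t in CNode (lshift m' c) (map lshift_ctree ts).

Lemma color_lshift_ctree t : color (lshift_ctree t) = lshift m' (color t).
Proof. by case: t. Qed.

Lemma csize_lshift_ctree t : csize (lshift_ctree t) = csize t.
Proof.
elim/ctree_ind_In: t => c ts IH /=; rewrite -map_comp.
by congr (sumn _).+1; apply: eq_map_In.
Qed.

Lemma Acolored_lshift_ctree t : Acolored B (lshift_ctree t) = Acolored A t.
Proof.
elim/ctree_ind_In: t => c ts IH /=; rewrite all_map.
by apply: eq_all_In => t /IH /= ->; rewrite color_lshift_ctree extAEul.
Qed.

Lemma lshift_ctree_inj : injective lshift_ctree.
Proof.
elim/ctree_ind_In => c ts IH [d us] /= [/ord_inj -> E]; congr CNode.
elim: ts us IH E => [|t ts IHts] [|u us] IH //= [tu E].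
rewrite (IH t _ u tu); last by left.
by rewrite (IHts us) // => s sts; apply: IH; right.
Qed.

Lemma Acolored_extA_lshift_root t i : Acolored B t -> color t = lshift m' i ->
  exists u, t = lshift_ctree u.
Proof.
elim/ctree_ind_In: t i => c ts IH i /= Bts ci; subst c.
suff [us ->] : exists us, ts = map lshift_ctree us by exists (CNode i us).
elim: ts IH Bts => [|t ts IHts] IH /=; first by exists [::].
case/andP => /andP [Bit Bt] Bts.
have [us ->] := IHts (fun s sts => IH s (or_intror sts)) Bts.
case: (split_ordP (color t)) Bit => [j tj | j ->]; last by rewrite extAEur.
by have [u ->] := IH t (or_introl erefl) j Bt tj; exists (u :: us).
Qed.

Definition nforest s := card_of (Aforest B predT s).

Lemma has_card_nforest s : has_card (Aforest B predT s) (nforest s).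
Proof. exact/card_ofP/(Atree_finite B s).2. Qed.

Lemma nforest0 : nforest 0 = 1.
Proof. exact: has_card_unique (has_card_nforest 0) (has_card_Aforest0 _ _). Qed.

Lemma nforestS s : nforest s.+1 = \sum_(j < s.+1) tA B j.+1 * nforest (s - j).
Proof.
apply: has_card_unique (has_card_nforest _) _.
apply: (has_card_Aforest_S (a := fun j => tA B j.+1) (b := fun j => nforest (s - j)))
  => j _; last exact: has_card_nforest.
by apply: eq_has_card (has_card_tA B j.+1) => t; split=> [|[]].
Qed.

Lemma tA_extA_S s : tA B s.+1 = tA A s.+1 + m' * nforest s.
Proof.
apply: has_card_unique (has_card_tA B s.+1) _.
pose L := map (@rshift m m') (enum 'I_m').
have newL : has_card (fun t => Atree B s.+1 t /\ color t \in L) (m' * nforest s).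
  have -> : (m' * nforest s = \sum_(c <- L) nforest s)%N.
    by rewrite big_const_seq count_predT size_map size_enum_ord iter_addn_0 mulnC.
  apply: has_card_Atree_root => [|c /mapP [j _ ->]].
    by rewrite map_inj_uniq ?enum_uniq //; exact: rshift_inj.
  apply: eq_has_card (has_card_nforest s) => f.
  by rewrite /Aforest; under [in X in _ <-> X]eq_all => t do rewrite extAEd.
have oldL := has_card_image lshift_ctree_inj (has_card_tA A s.+1).
apply: eq_has_card (has_cardU _ oldL newL) => [t | t [u _ ->] [_]]; last first.
  by rewrite color_lshift_ctree => /mapP [j _ /eqP]; rewrite eq_lrshift.
split=> [[[u [Au su] ->] | []] // | [Bt st]].
  by rewrite /Atree Acolored_lshift_ctree csize_lshift_ctree.
case: (split_ordP (color t)) => [i ti | j tj].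
  have [u tu] := Acolored_extA_lshift_root Bt ti; left; exists u => //.
  by rewrite /Atree -Acolored_lshift_ctree -csize_lshift_ctree -tu.
by right; split=> //; rewrite tj map_f ?mem_enum.
Qed.

End ExtendedMatrix.

Local Open Scope ring_scope.

Definition fps_mulX (f : fps) : fps := fun n => if n is s.+1 then f s else 0.

Section FormalPowerSeries.
Implicit Types (f g h : fps) (c : rat).

Lemma eq_fps_mul f f' g g' : f =1 f' -> g =1 g' -> fps_mul f g =1 fps_mul f' g'.
Proof. by move=> ff' gg' n; apply: eq_bigr => i _; rewrite ff' gg'. Qed.

Lemma fps_mulC f g : fps_mul f g =1 fps_mul g f.
Proof.
move=> n; rewrite /fps_mul (reindex_inj rev_ord_inj); apply: eq_bigr => i _.
by rewrite subKn 1?mulrC // -ltnS.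
Qed.

Lemma fps_mulDl f g h n : fps_mul (fps_add f g) h n = fps_mul f h n + fps_mul g h n.
Proof. by rewrite -big_split; apply: eq_bigr => i _; rewrite mulrDl. Qed.

Lemma fps_mulBl f g h n : fps_mul (fps_sub f g) h n = fps_mul f h n - fps_mul g h n.
Proof. by rewrite -sumrB; apply: eq_bigr => i _; rewrite mulrBl. Qed.

Lemma fps_mulZl c f g n : fps_mul (fps_scale c f) g n = c * fps_mul f g n.
Proof. by rewrite mulr_sumr; apply: eq_bigr => i _; rewrite mulrA. Qed.

Lemma fps_mul_constl c f n : fps_mul (fps_const c) f n = c * f n.
Proof. by rewrite /fps_mul big_ord_recl subn0 big1 ?addr0 // => i _; rewrite mul0r. Qed.

Lemma fps_mulDr f g h n : fps_mul h (fps_add f g) n = fps_mul h f n + fps_mul h g n.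
Proof. by rewrite fps_mulC fps_mulDl !(fps_mulC h). Qed.

Lemma fps_mulBr f g h n : fps_mul h (fps_sub f g) n = fps_mul h f n - fps_mul h g n.
Proof. by rewrite fps_mulC fps_mulBl !(fps_mulC h). Qed.

Lemma fps_mulZr c f g n : fps_mul g (fps_scale c f) n = c * fps_mul g f n.
Proof. by rewrite fps_mulC fps_mulZl fps_mulC. Qed.

Lemma fps_mul_constr c f n : fps_mul f (fps_const c) n = c * f n.
Proof. by rewrite fps_mulC fps_mul_constl. Qed.

Lemma fps_mul_mulXr f g : fps_mul f (fps_mulX g) =1 fps_mulX (fps_mul f g).
Proof.
case=> [|n]; first by rewrite /fps_mul big_ord1 mulr0.
rewrite /fps_mul big_ord_recr /= subnn mulr0 addr0.
by apply: eq_bigr => i _; rewrite subSn // -ltnS.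
Qed.

Lemma fps_mulS f g n : f 0%N = 0 ->
  fps_mul f g n.+1 = \sum_(i < n.+1) f i.+1 * g (n - i)%N.
Proof. by move=> f0; rewrite /fps_mul big_ord_recl f0 mul0r add0r. Qed.

Lemma fps_sqrt_unique f g : f 0%N = 1 -> g 0%N = 1 ->
  fps_mul f f =1 fps_mul g g -> f =1 g.
Proof.
move=> f0 g0 ffgg; elim/ltn_ind => -[_ | n IH]; first by rewrite f0 g0.
have sqrS h : fps_mul h h n.+1 =
    2 * h 0%N * h n.+1 + \sum_(i < n) h i.+1 * h (n - i)%N.
  rewrite /fps_mul big_ord_recl big_ord_recr /= subn0 subnn.
  under [in RHS]eq_bigr => i _ do rewrite -subSS.
  by rewrite mulrC; ring.
have := ffgg n.+1; rewrite !sqrS f0 g0.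
under eq_bigr => i _ do rewrite !IH ?ltnS ?leq_subr //.
by move=> E; lra.
Qed.

End FormalPowerSeries.

Lemma fps_quadratic_of_renewal (F G Phi : fps) (c : rat) :
  G =1 fps_add F (fps_scale c (fps_mulX Phi)) ->
  Phi =1 fps_add (fps_const 1) (fps_mul G Phi) ->
  G =1 fps_add (fps_sub (fps_add F (fps_mul G G)) (fps_mul G F)) (fps_scale c fps_X).
Proof.
(* G - F = c x Phi and (1 - G) Phi = 1, hence G (G - F) = c x G Phi = G - F - c x. *)
move=> DG DPhi n.
have GF : fps_mul G G n - fps_mul G F n = c * fps_mulX (fps_mul G Phi) n.
  rewrite -fps_mulBr -fps_mul_mulXr -fps_mulZr; apply: eq_fps_mul => // k.
  by rewrite /fps_sub DG /fps_add addrC addKr.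
rewrite /fps_add /fps_sub /fps_scale -[F n + _ - _]addrA GF DG /fps_add /fps_scale.
rewrite -addrA -mulrDr.
congr (_ + _ * _); case: n {GF} => [|n] /=; first by rewrite /fps_X addr0.
by rewrite DPhi /fps_add /fps_const /fps_X addrC.
Qed.

Lemma quadratic_root_sqr (F G : fps) (c : rat) :
  G =1 fps_add (fps_sub (fps_add F (fps_mul G G)) (fps_mul G F)) (fps_scale c fps_X) ->
  let T := fps_sub (fps_add (fps_const 1) F) (fps_scale 2 G) in
  fps_mul T T =1
    fps_sub (fps_mul (fps_sub (fps_const 1) F) (fps_sub (fps_const 1) F))
            (fps_scale (4 * c) fps_X).
Proof.
(* T^2 - D = 4 (G^2 - G F - G + F + c x). *)
move=> quad T n; rewrite /T -[RHS]/(fps_mul _ _ n - _) /fps_scale.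
do 4 rewrite ?fps_mulBl ?fps_mulDl ?fps_mulBr ?fps_mulDr ?fps_mulZl ?fps_mulZr
             ?fps_mul_constl ?fps_mul_constr.
move: (quad n); rewrite (fps_mulC F G) /fps_sub /fps_add /fps_scale /fps_const /fps_X.
by case: (n == 1)%N; case: (n == 0)%N => E; lra.
Qed.

Section ExtendedSeries.
Variables (m m' : nat) (A : coloring_matrix m).

Definition forest_series : fps := fun s => (nforest m' A s)%:R.

Lemma FA_extA :
  FA (extA m' A) =1 fps_add (FA A) (fps_scale m'%:R (fps_mulX forest_series)).
Proof.
case=> [|s]; first by rewrite /fps_add /fps_scale mulr0 addr0.
by rewrite /FA /fps_add /fps_scale /= tA_extA_S natrD natrM.
Qed.

Lemma forest_series_renewal :
  forest_series =1 fps_add (fps_const 1) (fps_mul (FA (extA m' A)) forest_series).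
Proof.
case=> [|s]; rewrite /fps_add /fps_const /=.
  by rewrite /fps_mul big_ord1 mul0r addr0 /forest_series nforest0.
rewrite fps_mulS // add0r /forest_series nforestS natr_sum.
by apply: eq_bigr => j _; rewrite natrM.
Qed.

End ExtendedSeries.

Theorem theorem26 (m m' : nat) (A : coloring_matrix m) :
  (1 <= m')%N ->
  let F := FA A in
  let F' := FA (extA m' A) in
  (* F_{A'} = F_A + F_{A'}^2 - F_{A'} F_A + m' x *)
  (forall n, F' n =
     fps_add (fps_sub (fps_add F (fps_mul F' F')) (fps_mul F' F))
             (fps_scale m'%:R fps_X) n) /\
  (* F_{A'} = (1 + F_A - sqrt((1 - F_A)^2 - 4 m' x)) / 2, where sqrt is the
     power-series square root with constant term 1 (which exists) *)
  (let D := fps_sub (fps_mul (fps_sub (fps_const 1) F) (fps_sub (fps_const 1) F))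
                    (fps_scale (4 * m'%:R) fps_X) in
   (exists S : fps, S 0%N = 1 /\ forall n, fps_mul S S n = D n) /\
   forall S : fps, S 0%N = 1 -> (forall n, fps_mul S S n = D n) ->
     forall n, F' n = fps_scale (1 / 2) (fps_sub (fps_add (fps_const 1) F) S) n).
Proof.
(* The identity holds for m' = 0 as well. *)
move=> _ F F'.
have quad := fps_quadratic_of_renewal (FA_extA m' A) (forest_series_renewal m' A).
split=> // D.
pose T := fps_sub (fps_add (fps_const 1) F) (fps_scale 2 F').
have T0 : T 0%N = 1 by rewrite /T /fps_sub /fps_add /fps_scale /fps_const /= mulr0 addr0 subr0.
have TT : fps_mul T T =1 D := quadratic_root_sqr quad.
split=> [|S S0 SS n]; first by exists T.
have ST : S =1 T := fps_sqrt_unique S0 T0 (fun n => etrans (SS n) (esym (TT n))).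
by move: (ST n); rewrite /T /fps_scale /fps_sub /fps_add => STn; lra.
Qed.
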